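(* Let $G$ be a finite group, $H\trianglelefteq G$ a normal subgroup and $g,h\in G$. Then (i) $\eta_g(\eta_g(H))=\eta_g(H)$; (ii) $\eta_{gh}(H)\le\eta_g(H)\eta_h(H)$; (iii) $\mathrm{FitL}(\eta_{gh}(H))\le\max\{\mathrm{FitL}(\eta_g(H)),\mathrm{FitL}(\eta_h(H))\}$.
   Context: Commutators: $[x,y]=x^{-1}y^{-1}xy$, $x^y=y^{-1}xy$; for subsets $X,Y\subseteq G$, $[X,Y]$ is the subgroup generated by all $[x,y]$, and $[X,{}_kY]=[\cdots[[X,Y],Y]\cdots,Y]$ with $k$ copies of $Y$. $g^G=\{g^x:x\in G\}$. Fix $M\in\mathbb{N}$ such that $[X,{}_MY]=[X,{}_iY]$ for all $i\ge M$ and all $X,Y\subseteq G$ with $X^G=X$, $Y^G=Y$. For $H\trianglelefteq G$ and $g\in G$, $\eta_g(H)=[H,{}_M\,g^G]$ (a normal subgroup of $G$ contained in $H$). $\mathrm{FitL}(A)$ denotes the Fitting length of a finite group $A$: the least $d$ such that there is a series $1=A_0\trianglelefteq\cdots\trianglelefteq A_d=A$ with nilpotent quotients (taken as $\infty$ if no such series exists). *)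

From mathcomp Require Import all_boot all_fingroup all_solvable.
Set Implicit Arguments. Unset Strict Implicit. Unset Printing Implicit Defensive.
Local Open Scope group_scope.

(* X^G = X for the whole finite group gT (the paper's G). *)
Definition conj_closed (gT : finGroupType) (X : {set gT}) : Prop :=
  class_support X [set: gT] = X.

Definition iter_comm (gT : finGroupType) (X Y : {set gT}) (k : nat) : {set gT} :=
  iter k (fun Z => [~: Z, Y]) X.

Definition stable_exponent (gT : finGroupType) (M : nat) : Prop :=
  forall X Y : {set gT}, conj_closed X -> conj_closed Y ->
    forall i, M <= i -> iter_comm X Y M = iter_comm X Y i.

Definition eta (gT : finGroupType) (M : nat) (g : gT) (H : {set gT}) : {set gT} :=
  iter_comm H (g ^: [set: gT]) M.

Definition fit_series (gT : finGroupType) (E : {set gT}) (d : nat) : Prop :=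
  exists A : nat -> {group gT},
    [/\ (A 0 :==: 1), (A d :==: E) &
        forall i, i < d -> (A i <| A i.+1) /\ nilpotent (A i.+1 / A i)].

(* FitL(E) <= d  (FitL(E) = infinity if no such series exists). *)
Definition FitL_le (gT : finGroupType) (E : {set gT}) (d : nat) : Prop :=
  exists2 d', d' <= d & fit_series E d'.

(* The engine is a commutator estimate: if X, Y, Z are normal subsets of G
   with Z ⊆ XY and A ⊴ G, then [A, _(a+b) Z] lies in every subgroup that
   contains [A, _a X] and [A, _b Y].  It follows by induction on a + b from
   [A, Z] ≤ [A, X][A, Y] and [BC, _n Z] ≤ [B, _n Z][C, _n Z] for normal B, C:
   one commutation is charged to X on one side and to Y on the other.
   By the choice of M, η_g(H) = [H, _2M g^G], which gives (i), and since
   (gh)^G ⊆ g^G h^G the estimate gives (ii).  With X = K, Y = L, Z = A = KL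
   it gives L_(2k+3)(KL) ≤ L_(k+1)(K) L_(k+1)(L) for normal K, L; as FitL(E) ≤ d
   iff the d-fold iterate of E ↦ L_(k+1)(E) kills E for some k, the subgroup
   η_g(H)η_h(H) ⊇ η_gh(H) has Fitting length at most d, which gives (iii). *)

From mathcomp Require Import all_boot all_fingroup all_solvable.
Set Implicit Arguments. Unset Strict Implicit. Unset Printing Implicit Defensive.
Local Open Scope group_scope.

Section IteratedCommutators.
Variable gT : finGroupType.
Implicit Types (A B C K L N : {group gT}) (X Y Z : {set gT}).
Local Notation T := [set: gT].

Definition iter_commg A Y n : {group gT} :=
  iter n (fun B : {group gT} => [~: B, Y]%G) A.

Lemma iter_commgE A Y n : iter_commg A Y n = iter_comm A Y n :> {set gT}.
Proof. by elim: n => //= n ->. Qed.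

Lemma iter_commgSn A Y n : iter_commg A Y n.+1 = iter_commg [~: A, Y]%G Y n.
Proof. by rewrite /iter_commg iterSr. Qed.

Lemma iter_commSg A B Y n :
  A \subset B -> iter_commg A Y n \subset iter_commg B Y n.
Proof. by move=> sAB; elim: n => //= n; apply: commSg. Qed.

Lemma commg_subl_normT A Y : T \subset 'N(A) -> [~: A, Y] \subset A.
Proof.
move=> nA; apply: subset_trans (commgS _ (subsetT Y)) _.
by rewrite (commg_subl _ [set: gT]%G).
Qed.

Lemma iter_commg_sub A Y n : T \subset 'N(A) -> iter_commg A Y n \subset A.
Proof.
move=> nA; elim: n => //= n IH.
exact: subset_trans (commSg _ IH) (commg_subl_normT _ nA).
Qed.

Lemma norms_iter_commg A Y n :
  T \subset 'N(A) -> T \subset 'N(Y) -> T \subset 'N(iter_commg A Y n).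
Proof. by move=> nA nY; elim: n => //= n IH; apply: normsR. Qed.

Lemma commg_mull_sub X1 X2 Z K : X2 \subset 'N(K) ->
  [~: X1, Z] \subset K -> [~: X2, Z] \subset K -> [~: X1 * X2, Z] \subset K.
Proof.
move=> nK s1 s2; rewrite gen_subG.
apply/subsetP=> _ /imset2P[_ z /mulsgP[x y X1x X2y ->] Zz ->].
rewrite commMgJ groupM ?(subsetP s2 _ (mem_commg X2y Zz)) //.
by rewrite memJ_norm ?(subsetP nK y X2y) ?(subsetP s1 _ (mem_commg X1x Zz)).
Qed.

Lemma commg_mulr_sub A X1 X2 Z K : X2 \subset 'N(K) -> Z \subset X1 * X2 ->
  [~: A, X1] \subset K -> [~: A, X2] \subset K -> [~: A, Z] \subset K.
Proof.
move=> nK sZ s1 s2; rewrite gen_subG; apply/subsetP=> _ /imset2P[a z Aa Zz ->].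
have /mulsgP[x y X1x X2y ->] := subsetP sZ z Zz.
rewrite commgMJ groupM ?(subsetP s2 _ (mem_commg Aa X2y)) //.
by rewrite memJ_norm ?(subsetP nK y X2y) ?(subsetP s1 _ (mem_commg Aa X1x)).
Qed.

Lemma iter_commg_join_sub B C Z n :
  T \subset 'N(B) -> T \subset 'N(C) -> T \subset 'N(Z) ->
  iter_commg (B <*> C) Z n \subset iter_commg B Z n * iter_commg C Z n.
Proof.
move=> nB nC nZ; elim: n => [|n IH].
  by rewrite /= norm_joinEr ?(subset_trans (subsetT C)).
have nBC := norms_iter_commg n.+1 nB nZ.
have nCC := norms_iter_commg n.+1 nC nZ.
rewrite -norm_joinEr ?(subset_trans (subsetT _) nBC) //=.
apply: subset_trans (commSg _ IH) _.
apply: commg_mull_sub; [|exact: joing_subl|exact: joing_subr].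
exact: subset_trans (subsetT _) (normsY nBC nCC).
Qed.

Lemma iter_commg_mul_sub X Y Z A N a b :
  T \subset 'N(X) -> T \subset 'N(Y) -> T \subset 'N(Z) -> Z \subset X * Y ->
  T \subset 'N(A) -> iter_commg A X a \subset N -> iter_commg A Y b \subset N ->
  iter_commg A Z (a + b) \subset N.
Proof.
move=> nX nY nZ sZXY; have [n lt_ab_n] := ubnP (a + b).
elim: n => // n IH in a b A lt_ab_n *; move=> nA sXN sYN.
case: a => [|a] in lt_ab_n sXN *.
  exact: subset_trans (iter_commg_sub _ _ nA) sXN.
case: b => [|b] in lt_ab_n sYN *.
  by rewrite addn0; exact: subset_trans (iter_commg_sub _ _ nA) sYN.
have nAX : T \subset 'N([~: A, X]) := normsR nA nX.
have nAY : T \subset 'N([~: A, Y]) := normsR nA nY.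
have sAZ : [~: A, Z] \subset [~: A, X] <*> [~: A, Y].
  apply: commg_mulr_sub sZXY _ _; [|exact: joing_subl|exact: joing_subr].
  exact: subset_trans (subsetT _) (normsY nAX nAY).
rewrite addSn iter_commgSn; apply: subset_trans (iter_commSg _ _ sAZ) _.
apply: subset_trans (iter_commg_join_sub _ nAX nAY nZ) _.
rewrite addSn addnS ltnS in lt_ab_n; rewrite mul_subG //.
  apply: IH; rewrite -?iter_commgSn ?addnS //.
  exact: subset_trans (iter_commSg _ _ (commg_subl_normT _ nA)) sYN.
rewrite -addSnnS; apply: IH; rewrite -?iter_commgSn ?addSn //.
exact: subset_trans (iter_commSg _ _ (commg_subl_normT _ nA)) sXN.
Qed.

Lemma lcn_iter_commg A n : 'L_n.+1(A) = iter_commg A A n :> {set gT}.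
Proof. by rewrite iter_commgE lcnE. Qed.

Lemma lcn_join_sub K L k : T \subset 'N(K) -> T \subset 'N(L) ->
  'L_(k.+1 + k.+1).+1(K <*> L) \subset 'L_k.+1(K) <*> 'L_k.+1(L).
Proof.
move=> nK nL; have nKL := normsY nK nL.
have sKLK : [~: K <*> L, K] \subset K.
  by rewrite commg_subr join_subG normG (subset_trans (subsetT L)).
have sKLL : [~: K <*> L, L] \subset L.
  by rewrite commg_subr join_subG normG (subset_trans (subsetT K)).
rewrite (lcn_iter_commg (K <*> L)%G).
apply: (iter_commg_mul_sub nK nL nKL _ nKL).
- by rewrite norm_joinEr ?(subset_trans (subsetT L)).
- rewrite iter_commgSn; apply: subset_trans (iter_commSg _ _ sKLK) _.
  by rewrite -lcn_iter_commg joing_subl.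
- rewrite iter_commgSn; apply: subset_trans (iter_commSg _ _ sKLL) _.
  by rewrite -lcn_iter_commg joing_subr.
Qed.

End IteratedCommutators.

Section FittingLength.
Variable gT : finGroupType.
Implicit Types (A B E F K L : {group gT}).
Local Notation T := [set: gT].

Lemma quotient_nilP A B :
  A <| B -> reflect (exists n, 'L_n.+1(B) \subset A) (nilpotent (B / A)).
Proof.
move=> /andP[_ nAB]; have nLA n : 'L_n.+1(B) \subset 'N(A).
  exact: subset_trans (lcn_sub _ _) nAB.
have quo_lcn n : 'L_n.+1(B) / A = 'L_n.+1(B / A).
  by rewrite /quotient morphim_lcn.
apply: (iffP (lcnP _)) => [] [n sLA]; exists n.
  by rewrite -(quotient_sub1 (nLA n)) quo_lcn sLA.
by rewrite -quo_lcn quotientS1.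
Qed.

Definition iter_lcn k d E : {group gT} :=
  iter d (fun B : {group gT} => 'L_k(B)%G) E.

Lemma iter_lcnSn k d E : iter_lcn k d.+1 E = iter_lcn k d 'L_k(E)%G.
Proof. by rewrite /iter_lcn iterSr. Qed.

Lemma iter_lcn_sub k d E : iter_lcn k d E \subset E.
Proof. by elim: d => //= d IH; apply: subset_trans (lcn_sub _ _) IH. Qed.

Lemma iter_lcnS k d E F : E \subset F -> iter_lcn k d E \subset iter_lcn k d F.
Proof. by move=> sEF; elim: d => //= d; apply: lcnS. Qed.

Lemma iter_lcn_sub_leq k k' d d' E : k <= k' -> d' <= d ->
  iter_lcn k' d E \subset iter_lcn k d' E.
Proof.
move=> le_kk' le_d'd; apply: (@subset_trans _ _ (iter_lcn k d E)).
  elim: d {le_d'd} => //= d IH.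
  exact: subset_trans (lcnS _ IH) (lcn_sub_leq _ le_kk').
by rewrite -(subnK le_d'd) /iter_lcn iterD iter_lcn_sub.
Qed.

Lemma norms_iter_lcn k d E : T \subset 'N(E) -> T \subset 'N(iter_lcn k d E).
Proof. by move=> nE; elim: d => //= d; exact: char_norm_trans (lcn_char _ _). Qed.

Lemma iter_lcn_join_sub k d K L : T \subset 'N(K) -> T \subset 'N(L) ->
  iter_lcn (k.+1 + k.+1).+1 d (K <*> L)
    \subset iter_lcn k.+1 d K <*> iter_lcn k.+1 d L.
Proof.
move=> nK nL; elim: d => //= d IH.
by apply: subset_trans (lcnS _ IH) (lcn_join_sub _ _ _); apply: norms_iter_lcn.
Qed.

Lemma fit_series_iter_lcn E d :
  fit_series E d -> exists k, iter_lcn k.+1 d E \subset [1 gT].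
Proof.
case=> A [/eqP A0 /eqP Ad nilA]; have -> : E = A d by apply: val_inj.
elim: d {Ad} => [|i IH] in nilA *; first by exists 0; rewrite A0.
have [k sAk] := IH (fun j lt_ji => nilA j (ltnW lt_ji)).
have [nA /(quotient_nilP nA)[n sLA]] := nilA i (ltnSn i).
exists (maxn k n); rewrite iter_lcnSn.
apply: subset_trans (iter_lcnS _ _ (subset_trans _ sLA)) _.
  by apply: lcn_sub_leq; rewrite ltnS leq_maxr.
by apply: subset_trans _ sAk; apply: iter_lcn_sub_leq; rewrite ?ltnS ?leq_maxl.
Qed.

Lemma iter_lcn_fit_series k d E :
  iter_lcn k.+1 d E \subset [1 gT] -> fit_series E d.
Proof.
move=> triv; exists (fun i => iter_lcn k.+1 (d - i) E); split.
- by rewrite subn0 eqEsubset triv sub1G.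
- by rewrite subnn.
move=> i lt_id; rewrite -(subnSK lt_id) iter_lcnSn /= -iter_lcnSn.
split; first exact: lcn_normal.
by apply/quotient_nilP; [exact: lcn_normal | exists k].
Qed.

Lemma FitL_le_iter_lcnP E d :
  FitL_le E d <-> exists k, iter_lcn k.+1 d E \subset [1 gT].
Proof.
split=> [[d' le_d'd /fit_series_iter_lcn[k triv]] | [k /iter_lcn_fit_series]].
  by exists k; apply: subset_trans triv; apply: iter_lcn_sub_leq.
by exists d.
Qed.

Lemma FitL_leS E F d : E \subset F -> FitL_le F d -> FitL_le E d.
Proof.
move=> sEF /FitL_le_iter_lcnP[k triv]; apply/FitL_le_iter_lcnP.
by exists k; apply: subset_trans triv; apply: iter_lcnS.
Qed.

Lemma FitL_le_join K L d : T \subset 'N(K) -> T \subset 'N(L) ->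
  FitL_le K d -> FitL_le L d -> FitL_le (K <*> L) d.
Proof.
move=> nK nL /FitL_le_iter_lcnP[k1 trivK] /FitL_le_iter_lcnP[k2 trivL].
pose k := maxn k1 k2; apply/FitL_le_iter_lcnP; exists (k.+1 + k.+1).
apply: subset_trans (iter_lcn_join_sub _ _ nK nL) _; rewrite join_subG.
apply/andP; split; [apply: subset_trans trivK | apply: subset_trans trivL];
  by apply: iter_lcn_sub_leq; rewrite ?ltnS ?leq_maxl ?leq_maxr.
Qed.

End FittingLength.

Section Eta.
Variable gT : finGroupType.
Implicit Types (A : {group gT}) (X Y : {set gT}).
Local Notation T := [set: gT].

Lemma conj_closed_normT X : T \subset 'N(X) -> conj_closed X.
Proof.
move=> nX; apply/eqP; rewrite /conj_closed eqEsubset sub_class_support andbT.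
by rewrite class_supportEr; apply/bigcupsP=> x _; rewrite (normsP nX).
Qed.

Lemma class_mul_sub (g h : gT) : (g * h) ^: T \subset (g ^: T) * (h ^: T).
Proof.
by apply/subsetP=> _ /imsetP[t _ ->]; rewrite conjMg mem_mulg ?memJ_class ?inE.
Qed.

Variables (M : nat) (H : {group gT}).
Hypotheses (stableM : stable_exponent gT M) (nH : T \subset 'N(H)).

Definition etag (x : gT) : {group gT} := iter_commg H (x ^: T) M.

Lemma etagE x : etag x = eta M x H :> {set gT}.
Proof. exact: iter_commgE. Qed.

Lemma norms_etag x : T \subset 'N(etag x).
Proof. exact: norms_iter_commg (class_norm _ _). Qed.

Lemma iter_commg_stable A Y n : T \subset 'N(A) -> T \subset 'N(Y) -> M <= n ->
  iter_commg A Y n = iter_commg A Y M :> {set gT}.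
Proof.
move=> nA nY le_Mn; rewrite !iter_commgE.
by rewrite (stableM (conj_closed_normT nA) (conj_closed_normT nY) le_Mn).
Qed.

Lemma eta_idem g : eta M g (eta M g H) = eta M g H.
Proof.
rewrite /eta {1}/iter_comm -iterD -/(iter_comm H _ (M + M)) -!iter_commgE.
by rewrite iter_commg_stable ?leq_addl ?class_norm.
Qed.

Lemma etag_mul_sub g h : etag (g * h) \subset etag g <*> etag h.
Proof.
rewrite /etag -(iter_commg_stable (n := M + M)) ?class_norm ?leq_addl //.
by apply: iter_commg_mul_sub (class_mul_sub g h) nH (joing_subl _ _) _;
  rewrite ?class_norm ?joing_subr.
Qed.

End Eta.

Theorem lemma4p1 (gT : finGroupType) (M : nat) (hM : stable_exponent gT M)
  (H : {group gT}) (hH : H <| [set: gT]) (g h : gT) :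
  [/\ eta M g (eta M g H) = eta M g H,
      eta M (g * h) H \subset eta M g H * eta M h H &
      forall d : nat, FitL_le (eta M g H) d -> FitL_le (eta M h H) d ->
        FitL_le (eta M (g * h) H) d].
Proof.
have nH := normal_norm hH.
have [nEg nEh] := (norms_etag M nH g, norms_etag M nH h).
have sEgh := etag_mul_sub hM nH g h.
split; first exact: eta_idem.
  by rewrite -!(etagE M H) -norm_joinEr // (subset_trans (subsetT _) nEg).
move=> d; rewrite -!(etagE M H) => FitEg FitEh.
exact: FitL_leS sEgh (FitL_le_join nEg nEh FitEg FitEh).
Qed.
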